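(* Let $\{X_j,\mathcal F_j\}_{j=1}^n$ be an $\mathcal{SL}$-submartingale. Then for every $\lambda>0$: (i) $\displaystyle \lambda\,\mathbb V\Big(\max_{1\le j\le n}X_j\ge\lambda\Big)\le \mathcal E\Big(I_{\{\max_{1\le j\le n}X_j\ge\lambda\}}X_n\Big)\le \mathcal E(X_n^+)\le\mathcal E(|X_n|)$, where $X_n^+:=X_n\vee 0$; (ii) $\displaystyle \lambda\, v\Big(\min_{1\le j\le n}X_j\le-\lambda\Big)\le \mathcal E(X_n)-\mathcal E(X_1)+\mathcal E\Big(-I_{\{\min_{1\le j\le n}X_j\le-\lambda\}}X_n\Big)\le \mathcal E(X_n)-\mathcal E(X_1)+\mathcal E(X_n^-)$, where $X_n^-:=-(X_n\wedge 0)$.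
   Context: Standing setting. $(\Omega,\mathcal F)$ is a measurable space with a discrete-time filtration $(\mathcal F_t)_{t\in\mathbb N}$, $\mathcal F_0$ trivial and $\mathcal F=\sigma(\bigcup_t\mathcal F_t)$. $\mathcal H$ is a linear space of $\mathcal F$-measurable real functions on $\Omega$ containing the constants, such that $X\in\mathcal H$ implies $|X|\in\mathcal H$ and $I_AX\in\mathcal H$ for all $A\in\mathcal F$; $\mathcal H_t:=\{X\in\mathcal H: X \text{ is } \mathcal F_t\text{-measurable}\}$. A family of maps $\mathcal E_t:\mathcal H\to\mathcal H_t$ is an $\mathcal{SL}$-expectation if for all $X,Y\in\mathcal H$ and $s\le t$: (i) $X\ge Y\Rightarrow\mathcal E_t(X)\ge\mathcal E_t(Y)$; (ii) $\mathcal E_s(\mathcal E_t(Y))=\mathcal E_s(Y)$; (iii) $\mathcal E_t(I_AY)=I_A\mathcal E_t(Y)$ for $A\in\mathcal F_t$; (iv) $\mathcal E_t(Y)=Y$ for $Y\in\mathcal H_t$; (v) $\mathcal E_t(X+Y)\le\mathcal E_t(X)+\mathcal E_t(Y)$; (vi) $\mathcal E_t(\lambda Y)=\lambda^+\mathcal E_t(Y)+\lambda^-\mathcal E_t(-Y)$ for $\lambda\in\mathcal H_t$ with $\lambda Y\in\mathcal H$; (vii) if $X_i\in\mathcal H$, $X_i(\omega)\downarrow0$ for every $\omega$, then $\mathcal E_0(X_i)\to0$. Write $\mathcal E:=\mathcal E_0$ (real-valued). Capacities: $\mathbb V(A):=\mathcal E(I_A)$, $v(A):=-\mathcal E(-I_A)$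 for $A\in\mathcal F$. A statement holds quasi-surely (q.s.) if it holds outside a set $N$ with $\mathcal E(I_N)=0$. $\|X\|_1:=\mathcal E(|X|)$; $L^1$ is the completion of $\{X\in\mathcal H:\|X\|_1<\infty\}$ under $\|\cdot\|_1$ modulo null elements, and $\mathcal E_t$ extend to $L^1$ by continuity. For a stopping time $T$, $\mathcal E_T(\cdot)(\omega):=\mathcal E_{T(\omega)}(\cdot)(\omega)$. A process $(X_j)$ adapted to $(\mathcal F_j)$ with $X_j\in L^1$ is an $\mathcal{SL}$-submartingale if $X_s\le\mathcal E_s(X_t)$ for all $s\le t$, and an $\mathcal{SL}$-martingale if $X_s=\mathcal E_s(X_t)$ for all $s\le t$. *)

From Stdlib Require Import Reals Lra Lia Classical ClassicalEpsilon.
Open Scope R_scope.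
Set Implicit Arguments.

Section SL.
Context {Omega : Type}.


Definition indic (A : (Omega -> Prop)) : (Omega -> R) :=
  fun w => if excluded_middle_informative (A w) then 1 else 0.

Definition sigma_algebra (G : (Omega -> Prop) -> Prop) : Prop :=
  G (fun _ => True) /\
  (forall A, G A -> G (fun w => ~ A w)) /\
  (forall A : nat -> (Omega -> Prop), (forall k, G (A k)) -> G (fun w => exists k, A k w)).

Definition measurable (G : (Omega -> Prop) -> Prop) (X : (Omega -> R)) : Prop :=
  forall a : R, G (fun w => X w <= a).

Definition Finf (F : nat -> (Omega -> Prop) -> Prop) : (Omega -> Prop) -> Prop :=
  fun A => forall G, sigma_algebra G -> (forall t B, F t B -> G B) -> G A.

Record filtration (F : nat -> (Omega -> Prop) -> Prop) : Prop := {
  filt_sigma : forall t, sigma_algebra (F t);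
  filt_incr : forall s t A, (s <= t)%nat -> F s A -> F t A;
  filt_triv : forall A, F 0%nat A -> (forall w, ~ A w) \/ (forall w, A w)
}.

Record Hspace (F : nat -> (Omega -> Prop) -> Prop) (H : (Omega -> R) -> Prop) : Prop := {
  H_meas : forall X, H X -> measurable (Finf F) X;
  H_add : forall X Y, H X -> H Y -> H (fun w => X w + Y w);
  H_scal : forall (c : R) X, H X -> H (fun w => c * X w);
  H_const : forall c : R, H (fun _ => c);
  H_abs : forall X, H X -> H (fun w => Rabs (X w));
  H_ind : forall A X, Finf F A -> H X -> H (fun w => indic A w * X w)
}.

Definition Ht (F : nat -> (Omega -> Prop) -> Prop) (H : (Omega -> R) -> Prop) (t : nat) (X : (Omega -> R)) :=
  H X /\ measurable (F t) X.

Definition ppart (x : R) := Rmax x 0.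
Definition npart (x : R) := Rmax (- x) 0.

Record SLexp (F : nat -> (Omega -> Prop) -> Prop) (H : (Omega -> R) -> Prop)
       (E : nat -> (Omega -> R) -> (Omega -> R)) : Prop := {
  E_range : forall t X, H X -> Ht F H t (E t X);
  E_mono : forall t X Y, H X -> H Y -> (forall w, X w >= Y w) ->
           forall w, E t X w >= E t Y w;
  E_tower : forall s t Y, (s <= t)%nat -> H Y ->
           forall w, E s (E t Y) w = E s Y w;
  E_ind : forall t A Y, F t A -> H Y ->
           forall w, E t (fun v => indic A v * Y v) w = indic A w * E t Y w;
  E_id : forall t Y, Ht F H t Y -> forall w, E t Y w = Y w;
  E_subadd : forall t X Y, H X -> H Y ->
           forall w, E t (fun v => X v + Y v) w <= E t X w + E t Y w;
  E_homog : forall t (lam Y : (Omega -> R)), Ht F H t lam -> H Y ->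
           H (fun v => lam v * Y v) ->
           forall w, E t (fun v => lam v * Y v) w =
                     ppart (lam w) * E t Y w + npart (lam w) * E t (fun v => - Y v) w;
  E_cont : forall X : nat -> (Omega -> R), (forall i, H (X i)) ->
           (forall i w, X (S i) w <= X i w) ->
           (forall w, Un_cv (fun i => X i w) 0) ->
           forall w, Un_cv (fun i => E 0%nat (X i) w) 0
}.

Section L1.
Variables (F : nat -> (Omega -> Prop) -> Prop) (H : (Omega -> R) -> Prop) (E : nat -> (Omega -> R) -> (Omega -> R))
          (w0 : Omega).

(* the real-valued expectation E = E_0 (E_0 X is constant since F_0 is trivial) *)
Definition Ereal (X : (Omega -> R)) : R := E 0%nat X w0.

Definition capV (A : (Omega -> Prop)) : R := Ereal (indic A).
Definition capv (A : (Omega -> Prop)) : R := - Ereal (fun w => - indic A w).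

Definition null (N : (Omega -> Prop)) : Prop := Finf F N /\ Ereal (indic N) = 0.

Definition qs (P : Omega -> Prop) : Prop :=
  exists N, null N /\ forall w, ~ N w -> P w.

(* Y is a fast ||.||_1-Cauchy sequence in H representing (q.s.) the function X *)
Definition approx (X : (Omega -> R)) (Y : nat -> (Omega -> R)) : Prop :=
  (forall k, H (Y k)) /\
  (forall k, Ereal (fun w => Rabs (Y (S k) w - Y k w)) <= (/ 2) ^ k) /\
  qs (fun w => Un_cv (fun k => Y k w) (X w)).

Definition inL1 (X : (Omega -> R)) : Prop := exists Y, approx X Y.

(* Z is (a version of) the continuous extension E_t(X) for X in L^1 *)
Definition CEL1 (t : nat) (X Z : (Omega -> R)) : Prop :=
  exists Y, approx X Y /\ qs (fun w => Un_cv (fun k => E t (Y k) w) (Z w)).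

(* r is the continuous extension E(X) for X in L^1 *)
Definition EL1 (X : (Omega -> R)) (r : R) : Prop :=
  exists Y, approx X Y /\ Un_cv (fun k => Ereal (Y k)) r.

Definition SLsubmart (n : nat) (X : nat -> (Omega -> R)) : Prop :=
  (forall j, (1 <= j <= n)%nat -> measurable (F j) (X j) /\ inL1 (X j)) /\
  (forall s t, (1 <= s)%nat -> (s <= t)%nat -> (t <= n)%nat ->
     exists Z, CEL1 s (X t) Z /\ qs (fun w => X s w <= Z w)).

End L1.

(* max_{1<=j<=m} X_j and min_{1<=j<=m} X_j (meaningful for m >= 1) *)
Fixpoint maxX (X : nat -> (Omega -> R)) (m : nat) (w : Omega) : R :=
  match m with
  | O => X 1%nat w
  | S k => Rmax (maxX X k w) (X (S k) w)
  end.
Fixpoint minX (X : nat -> (Omega -> R)) (m : nat) (w : Omega) : R :=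
  match m with
  | O => X 1%nat w
  | S k => Rmin (minX X k w) (X (S k) w)
  end.

End SL.

From Stdlib Require Import Reals Lra Lia FunctionalExtensionality PropExtensionality Classical ClassicalEpsilon.
Open Scope R_scope.

(* Elements of L^1 are handled through fast approximating sequences (Y_k) in H,
   with E|Y_{k+1} - Y_k| <= C 2^-k and Y_k -> X quasi-surely.  Its analytic core is [fast_to_zero]: a fast sequence tending
   to 0 q.s. satisfies E|W_k| <= 2C 2^-k (continuity from above plus the fact
   that null sets do not contribute).  From it follow a comparison principle
   and a well-defined, monotone, subadditive expectation [Lval] on L^1.  The
   conditioning step [Lval_condition] replaces X by E_t(X) on an F_t-measurable
   event without changing the expectation.

   The two maximal inequalities are then proved as in the classical case, by a
   forward induction over the time at which the level is first crossed:
   [max_capacity_bound] for {max X_j >= lam} and [min_capacity_bound] for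
   {min X_j <= -lam}.  The remaining inequalities of the theorem are
   monotonicity of the L^1 expectation. *)

Lemma fext {Omega : Type} (f g : Omega -> R) : (forall w, f w = g w) -> f = g.
Proof. apply functional_extensionality. Qed.

Lemma sext {Omega : Type} (A B : Omega -> Prop) : (forall w, A w <-> B w) -> A = B.
Proof.
  intro h; apply functional_extensionality; intro w.
  apply propositional_extensionality; auto.
Qed.

Lemma indic_01 {Omega : Type} (A : Omega -> Prop) w :
  indic A w = 1 /\ A w \/ indic A w = 0 /\ ~ A w.
Proof. unfold indic; destruct (excluded_middle_informative (A w)); auto. Qed.

Ltac indic_cases :=
  repeat match goal with
  | |- context [indic ?A ?w] =>
      let h := fresh "hA" in destruct (indic_01 A w) as [[-> h] | [-> h]]
  end.

Section SigmaAlgebras.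
Context {Omega : Type}.
Variable G : (Omega -> Prop) -> Prop.
Hypothesis hG : sigma_algebra G.

Lemma sa_ext A B : G A -> (forall w, A w <-> B w) -> G B.
Proof. intros h e; rewrite <- (sext A B e); exact h. Qed.

Lemma sa_compl A : G A -> G (fun w => ~ A w).
Proof. destruct hG as [_ [hc _]]; apply hc. Qed.

Lemma sa_prop (P : Prop) : G (fun _ => P).
Proof.
  destruct hG as [hT _].
  destruct (classic P) as [p | p].
  - apply (sa_ext _ _ hT); tauto.
  - apply (sa_ext (fun w => ~ True)); [apply sa_compl, hT | tauto].
Qed.

Lemma sa_union A B : G A -> G B -> G (fun w => A w \/ B w).
Proof.
  destruct hG as [_ [_ hU]]; intros hA hB.
  apply (sa_ext (fun w => exists k, (match k with O => A | _ => B end) w)).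
  - apply hU; intros [|k]; auto.
  - intro w; split.
    + intros [[|k] h]; auto.
    + intros [h | h]; [exists O | exists 1%nat]; auto.
Qed.

Lemma sa_inter A B : G A -> G B -> G (fun w => A w /\ B w).
Proof.
  intros hA hB; apply (sa_ext (fun w => ~ (~ A w \/ ~ B w))).
  - apply sa_compl, sa_union; apply sa_compl; auto.
  - intro w; tauto.
Qed.

(* Strict and reversed sub-level sets of a measurable function are measurable:
   {X < a} is the countable union of the sets {X <= a - 1/(k+1)}. *)
Lemma meas_lt X a : measurable G X -> G (fun w => X w < a).
Proof.
  destruct hG as [_ [_ hU]]; intro hX.
  apply (sa_ext (fun w => exists k, X w <= a - / INR (S k))).
  - apply hU; intro k; apply hX.
  - intro w; split.
    + intros [k hk].
      assert (0 < / INR (S k)) by (apply Rinv_0_lt_compat, lt_0_INR; lia); lra.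
    + intro hl; destruct (archimed_cor1 (a - X w)) as [N [hN hN0]]; [lra |].
      exists (pred N); replace (S (pred N)) with N by lia; lra.
Qed.

Lemma meas_ge X a : measurable G X -> G (fun w => X w >= a).
Proof.
  intro hX; apply (sa_ext (fun w => ~ X w < a)).
  - apply sa_compl, meas_lt, hX.
  - intro w; lra.
Qed.

Lemma meas_const (c : R) : measurable G (fun _ => c).
Proof. intro a; apply sa_prop. Qed.

Lemma meas_indic_mul A X : G A -> measurable G X -> measurable G (fun w => indic A w * X w).
Proof.
  intros hA hX a.
  apply (sa_ext (fun w => (A w /\ X w <= a) \/ (~ A w /\ 0 <= a))).
  - apply sa_union; apply sa_inter; auto using sa_compl, sa_prop.
  - intro w; indic_cases; split; intro h; try tauto; try lra.
    + destruct h as [h | h]; [lra | tauto].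
    + left; split; auto; lra.
    + destruct h as [h | h]; [tauto | lra].
    + right; split; auto; lra.
Qed.

Lemma meas_opp X : measurable G X -> measurable G (fun w => - X w).
Proof. intros hX a; apply (sa_ext (fun w => X w >= - a)); [apply meas_ge, hX | intro w; lra]. Qed.

End SigmaAlgebras.

Lemma Finf_sa {Omega : Type} (F : nat -> (Omega -> Prop) -> Prop) : sigma_algebra (Finf F).
Proof.
  split; [| split].
  - intros G hG _; apply hG.
  - intros A hA G hG hF; apply (sa_compl _ hG), hA; auto.
  - intros A hA G hG hF; apply hG; intro k; apply hA; auto.
Qed.

Lemma F_Finf {Omega : Type} (F : nat -> (Omega -> Prop) -> Prop) t A : F t A -> Finf F A.
Proof. intros h G hG hF; eapply hF; eauto. Qed.

(* [hit P m] is the event that [P j] occurs for some time 1 <= j <= m; the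
   events {max_{j<=m} X_j >= lam} and {min_{j<=m} X_j <= -lam} are of this form. *)
Definition hit {Omega : Type} (P : nat -> Omega -> Prop) (m : nat) : Omega -> Prop :=
  fun w => exists j, (1 <= j <= m)%nat /\ P j w.

Lemma hit_0 {Omega : Type} (P : nat -> Omega -> Prop) w : ~ hit P 0 w.
Proof. intros [j [hj _]]; lia. Qed.

Lemma hit_S {Omega : Type} (P : nat -> Omega -> Prop) m w :
  hit P (S m) w <-> hit P m w \/ P (S m) w.
Proof.
  split.
  - intros [j [hj pj]]; destruct (Nat.eq_dec j (S m)) as [-> | e]; auto.
    left; exists j; split; auto; lia.
  - intros [[j [hj pj]] | h]; [exists j | exists (S m)]; split; auto; lia.
Qed.

Lemma hit_mono {Omega : Type} (P : nat -> Omega -> Prop) m m' w :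
  (m <= m')%nat -> hit P m w -> hit P m' w.
Proof. intros h [j [hj pj]]; exists j; split; auto; lia. Qed.

Lemma hit_meas {Omega : Type} (G : (Omega -> Prop) -> Prop) (P : nat -> Omega -> Prop) m :
  sigma_algebra G -> (forall j, (1 <= j <= m)%nat -> G (P j)) -> G (hit P m).
Proof.
  intro hG; induction m as [| m IH]; intro hP.
  - apply (sa_ext _ (fun _ => False)); [apply sa_prop, hG | intro w; split; [tauto | apply hit_0]].
  - apply (sa_ext _ (fun w => hit P m w \/ P (S m) w)).
    + apply sa_union; auto; [apply IH; intros; apply hP | apply hP]; lia.
    + intro w; rewrite hit_S; tauto.
Qed.

Lemma hit_adapted {Omega : Type} (F : nat -> (Omega -> Prop) -> Prop) (hF : filtration F)
  (P : nat -> Omega -> Prop) n m t :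
  (forall j, (1 <= j <= n)%nat -> F j (P j)) ->
  (m <= t)%nat -> (t <= n)%nat -> F t (hit P m).
Proof.
  intros hP h1 h2; apply hit_meas; [apply (filt_sigma hF) |].
  intros j hj; apply (filt_incr hF (s := j)); [lia | apply hP; lia].
Qed.

Lemma maxX_hit {Omega : Type} (X : nat -> Omega -> R) lam m w :
  maxX X (S m) w >= lam <-> hit (fun j v => X j v >= lam) (S m) w.
Proof.
  induction m as [| m IH].
  - simpl; split.
    + intro h; exists 1%nat; split; [lia |]; unfold Rmax in h; destruct Rle_dec; lra.
    + intros [j [hj pj]]; replace j with 1%nat in pj by lia.
      unfold Rmax; destruct Rle_dec; lra.
  - change (maxX X (S (S m)) w) with (Rmax (maxX X (S m) w) (X (S (S m)) w)).
    rewrite hit_S, <- IH; unfold Rmax; destruct Rle_dec; lra.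
Qed.

Lemma minX_hit {Omega : Type} (X : nat -> Omega -> R) lam m w :
  minX X (S m) w <= - lam <-> hit (fun j v => X j v <= - lam) (S m) w.
Proof.
  induction m as [| m IH].
  - simpl; split.
    + intro h; exists 1%nat; split; [lia |]; unfold Rmin in h; destruct Rle_dec; lra.
    + intros [j [hj pj]]; replace j with 1%nat in pj by lia.
      unfold Rmin; destruct Rle_dec; lra.
  - change (minX X (S (S m)) w) with (Rmin (minX X (S m) w) (X (S (S m)) w)).
    rewrite hit_S, <- IH; unfold Rmin; destruct Rle_dec; lra.
Qed.

Lemma cv_const (c : R) : Un_cv (fun _ => c) c.
Proof. intros e he; exists O; intros; unfold R_dist; rewrite Rminus_diag, Rabs_R0; auto. Qed.

Lemma cv_dominated (a b : nat -> R) la lb :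
  (forall k, Rabs (a k - la) <= Rabs (b k - lb)) -> Un_cv b lb -> Un_cv a la.
Proof.
  intros hd hb e he; destruct (hb e he) as [N hN]; exists N; intros k hk.
  unfold R_dist in *; specialize (hN k hk); specialize (hd k); lra.
Qed.

Lemma cv_shift (u : nat -> R) l k : Un_cv u l -> Un_cv (fun m => u (k + S m)%nat) l.
Proof. intros hu e he; destruct (hu e he) as [N hN]; exists N; intros m hm; apply hN; lia. Qed.

Lemma cv_geom : Un_cv (fun k => (/ 2) ^ k) 0.
Proof.
  intros e he; destruct (pow_lt_1_zero (/ 2)) with (y := e) as [N hN]; auto.
  - rewrite Rabs_right; lra.
  - exists N; intros n hn; unfold R_dist; rewrite Rminus_0_r; apply hN; lia.
Qed.

Lemma cv_le_geom (a b : nat -> R) ra rb D :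
  (forall k, a k <= b k + D * (/ 2) ^ k) -> Un_cv a ra -> Un_cv b rb -> ra <= rb.
Proof.
  intros h ha hb; assert (ra <= rb + D * 0); [| lra].
  apply (Rle_cv_lim (Un := a) (Vn := fun k => b k + D * (/ 2) ^ k)); auto.
  apply CV_plus; auto; apply CV_mult; [apply cv_const | apply cv_geom].
Qed.

(* The geometric error budget: adding [C 2^-(k+m)] to [2C(2^-k - 2^-(k+m))]
   gives [2C(2^-k - 2^-(k+m+1))]; hence partial sums stay below [2C 2^-k]. *)
Lemma geom_budget_step C k m :
  2 * C * ((/ 2) ^ k - (/ 2) ^ (k + m)) + C * (/ 2) ^ (k + m)
  = 2 * C * ((/ 2) ^ k - (/ 2) ^ (k + S m)).
Proof. rewrite Nat.add_succ_r; simpl; field. Qed.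

Lemma geom_budget_le C k m : 0 <= C -> 2 * C * ((/ 2) ^ k - (/ 2) ^ (k + m)) <= 2 * C * (/ 2) ^ k.
Proof. intro hC; assert (0 <= (/ 2) ^ (k + m)) by (apply pow_le; lra); nra. Qed.

Lemma geom_increments_drift (u : nat -> R) C :
  (forall k, Rabs (u (S k) - u k) <= C * (/ 2) ^ k) ->
  forall k m, Rabs (u (k + m)%nat - u k) <= 2 * C * ((/ 2) ^ k - (/ 2) ^ (k + m)).
Proof.
  intros hu k m; induction m as [| m IH].
  - rewrite Nat.add_0_r, Rminus_diag, Rabs_R0; lra.
  - rewrite <- geom_budget_step, Nat.add_succ_r.
    replace (u (S (k + m)) - u k) with ((u (S (k + m)) - u (k + m)%nat) + (u (k + m)%nat - u k)) by ring.
    eapply Rle_trans; [apply Rabs_triang |]; specialize (hu (k + m)%nat); lra.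
Qed.

Lemma geom_increments_cv (u : nat -> R) C :
  (forall k, Rabs (u (S k) - u k) <= C * (/ 2) ^ k) -> exists r, Un_cv u r.
Proof.
  intro hu.
  assert (hC : 0 <= C) by (specialize (hu O); simpl in hu; pose proof (Rabs_pos (u 1%nat - u O)); lra).
  destruct (R_complete u) as [r hr]; [| exists r; exact hr].
  intros e he.
  destruct (cv_geom (e / (2 * C + 1))) as [N hN]; [apply Rdiv_lt_0_compat; lra |].
  exists N; intros p q hp hq; unfold R_dist.
  assert (cauchy : forall a b, (N <= a <= b)%nat -> Rabs (u b - u a) < e).
  { intros a b hab; replace b with (a + (b - a))%nat by lia.
    eapply Rle_lt_trans; [apply geom_increments_drift, hu |].
    eapply Rle_lt_trans; [apply geom_budget_le, hC |].
    specialize (hN a ltac:(lia)); unfold R_dist in hN; rewrite Rminus_0_r, Rabs_right in hN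
      by (apply Rle_ge, pow_le; lra).
    apply (Rmult_lt_compat_l (2 * C + 1)) in hN; [| lra].
    field_simplify in hN; [| lra]. assert (0 <= (/ 2) ^ a) by (apply pow_le; lra); nra. }
  destruct (Nat.le_ge_cases p q) as [h | h].
  - rewrite Rabs_minus_sym; apply cauchy; lia.
  - apply cauchy; lia.
Qed.

Section SublinearExpectation.
Context {Omega : Type}.
Variables (F : nat -> (Omega -> Prop) -> Prop) (H : (Omega -> R) -> Prop)
          (E : nat -> (Omega -> R) -> (Omega -> R)) (w0 : Omega).
Hypotheses (hF : filtration F) (hH : Hspace F H) (hE : SLexp F H E).

Lemma H_ext f g : H f -> (forall w, f w = g w) -> H g.
Proof. intros h e; rewrite <- (fext f g e); exact h. Qed.

Lemma H_opp f : H f -> H (fun w => - f w).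
Proof. intro h; apply (H_ext (fun w => -1 * f w)); [apply (H_scal hH), h | intro; ring]. Qed.

Lemma H_minus f g : H f -> H g -> H (fun w => f w - g w).
Proof. intros a b; apply (H_ext (fun w => f w + - g w)); [apply (H_add hH); auto using H_opp | intro; ring]. Qed.

Lemma H_abs_diff f g : H f -> H g -> H (fun w => Rabs (f w - g w)).
Proof. intros a b; apply (H_abs hH), H_minus; auto. Qed.

Lemma H_pos_part f : H f -> H (fun w => Rmax (f w) 0).
Proof.
  intro h; apply (H_ext (fun w => / 2 * (f w + Rabs (f w)))).
  - apply (H_scal hH), (H_add hH), (H_abs hH); auto.
  - intro w; unfold Rmax, Rabs; destruct Rle_dec, Rcase_abs; lra.
Qed.

Lemma H_indic_const A c : Finf F A -> H (fun w => c * indic A w).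
Proof. intro h; apply (H_ext (fun w => indic A w * c)); [apply (H_ind hH), (H_const hH); auto | intro; ring]. Qed.

Lemma H_indic A : Finf F A -> H (indic A).
Proof. intro h; apply (H_ext (fun w => 1 * indic A w)); [apply H_indic_const, h | intro; ring]. Qed.

Lemma Ht_indic_const t A c : F t A -> Ht F H t (fun w => c * indic A w).
Proof.
  intro hA; split; [apply H_indic_const, (F_Finf _ t), hA |].
  rewrite (fext (fun w => c * indic A w) (fun w => indic A w * (fun _ => c) w)) by (intro; ring).
  apply meas_indic_mul, meas_const; auto; apply (filt_sigma hF).
Qed.

Lemma Ht_indic_mul t A f : F t A -> Ht F H t f -> Ht F H t (fun w => indic A w * f w).
Proof.
  intros hA [h m]; split; [apply (H_ind hH); auto; apply (F_Finf _ t), hA |].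
  apply meas_indic_mul; auto; apply (filt_sigma hF).
Qed.

Lemma E_eq t f g w : (forall v, f v = g v) -> E t f w = E t g w.
Proof. intro e; rewrite (fext f g e); auto. Qed.

Lemma E_in_H t Y : H Y -> H (E t Y).
Proof. intro h; apply (E_range hE t Y h). Qed.

Lemma E_const t c w : E t (fun _ => c) w = c.
Proof. apply (E_id hE); split; [apply (H_const hH) | apply meas_const, (filt_sigma hF)]. Qed.

Lemma E_le t X Y w : H X -> H Y -> (forall v, X v <= Y v) -> E t X w <= E t Y w.
Proof. intros a b c; apply Rge_le, (E_mono hE); auto; intro v; apply Rle_ge, c. Qed.

Lemma E_nonneg t X w : H X -> (forall v, 0 <= X v) -> 0 <= E t X w.
Proof. intros a b; rewrite <- (E_const t 0 w); apply E_le; auto; apply (H_const hH). Qed.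

Lemma E_diff_le t X Y w : H X -> H Y -> E t X w - E t Y w <= E t (fun v => X v - Y v) w.
Proof.
  intros a b; assert (E t X w <= E t (fun v => X v - Y v) w + E t Y w); [| lra].
  rewrite (E_eq t X (fun v => (X v - Y v) + Y v)) by (intro; ring).
  apply (E_subadd hE); auto using H_minus.
Qed.

(* Sublinearity makes every E_t 1-Lipschitz for the seminorm E_t|.|. *)
Lemma E_abs_diff t X Y w : H X -> H Y -> Rabs (E t X w - E t Y w) <= E t (fun v => Rabs (X v - Y v)) w.
Proof.
  intros a b; apply Rabs_le; split.
  - assert (E t Y w - E t X w <= E t (fun v => Rabs (X v - Y v)) w); [| lra].
    eapply Rle_trans; [apply E_diff_le; auto |].
    apply E_le; auto using H_minus, H_abs_diff; intro v; rewrite Rabs_minus_sym; apply Rle_abs.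
  - eapply Rle_trans; [apply E_diff_le; auto |].
    apply E_le; auto using H_minus, H_abs_diff; intro v; apply Rle_abs.
Qed.

Lemma E_tower0 t Y w : H Y -> E 0%nat (E t Y) w = E 0%nat Y w.
Proof. intro h; apply (E_tower hE); auto; lia. Qed.

Lemma E_pos_homog t c f w : 0 <= c -> H f -> E t (fun v => c * f v) w = c * E t f w.
Proof.
  intros hc hf; rewrite (E_homog hE (lam := fun _ => c) f).
  - unfold ppart, npart; rewrite Rmax_left, Rmax_right by lra; ring.
  - split; [apply (H_const hH) | apply meas_const, (filt_sigma hF)].
  - exact hf.
  - apply (H_scal hH), hf.
Qed.

Lemma E_transl t P Q w : Ht F H t P -> H Q -> E t (fun v => P v + Q v) w = P w + E t Q w.
Proof.
  intros [hP mP] hQ; apply Rle_antisym.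
  - eapply Rle_trans; [apply (E_subadd hE); auto |].
    rewrite (E_id hE (t := t) (Y := P)); [lra | split; auto].
  - assert (hsub : E t Q w <= E t (fun v => P v + Q v) w + E t (fun v => - P v) w).
    { rewrite (E_eq t Q (fun v => (P v + Q v) + - P v)) by (intro; ring).
      apply (E_subadd hE); auto using H_opp; apply (H_add hH); auto. }
    rewrite (E_id hE (t := t) (Y := fun v => - P v)) in hsub; [lra |].
    split; [apply H_opp, hP | apply meas_opp; auto; apply (filt_sigma hF)].
Qed.

Lemma E_split_disjoint t S T W w :
  F t S -> Finf F T -> (forall v, S v -> ~ T v) -> H W ->
  E t (fun v => indic S v * W v + indic T v * W v) w = indic S w * E t W w + E t (fun v => indic T v * W v) w.
Proof.
  intros hS hT hST hW.
  set (Q := fun v => indic S v * W v + indic T v * W v).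
  assert (hSc : F t (fun v => ~ S v)) by (apply sa_compl, hS; apply (filt_sigma hF)).
  assert (hQ : H Q) by (apply (H_add hH); apply (H_ind hH); auto; apply (F_Finf _ t), hS).
  transitivity (indic S w * E t Q w + indic (fun v => ~ S v) w * E t Q w).
  { indic_cases; first [ring | tauto]. }
  rewrite <- (E_ind hE t S Q), <- (E_ind hE t _ Q), <- (E_ind hE t S W) by auto.
  f_equal; apply E_eq; intro v; unfold Q; specialize (hST v); indic_cases; first [ring | tauto].
Qed.

Lemma null_empty : null F E w0 (fun _ => False).
Proof.
  split; [apply sa_prop, Finf_sa |].
  unfold Ereal; rewrite (E_eq 0 _ (fun _ => 0)); [apply E_const |].
  intro v; indic_cases; tauto.
Qed.

Lemma null_union N1 N2 : null F E w0 N1 -> null F E w0 N2 -> null F E w0 (fun w => N1 w \/ N2 w).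
Proof.
  intros [f1 e1] [f2 e2].
  assert (fu : Finf F (fun w => N1 w \/ N2 w)) by (apply sa_union; auto; apply Finf_sa).
  split; auto; unfold Ereal in *; apply Rle_antisym.
  - eapply Rle_trans; [apply (E_le _ _ (fun w => indic N1 w + indic N2 w)) |].
    + apply H_indic, fu.
    + apply (H_add hH); apply H_indic; auto.
    + intro v; indic_cases; tauto || lra.
    + eapply Rle_trans; [apply (E_subadd hE); apply H_indic; auto | lra].
  - apply E_nonneg; [apply H_indic, fu | intro v; indic_cases; lra].
Qed.

Lemma qs_all (P : Omega -> Prop) : (forall w, P w) -> qs F E w0 P.
Proof. intro h; exists (fun _ => False); split; [apply null_empty | auto]. Qed.

Lemma qs_mono (P Q : Omega -> Prop) : qs F E w0 P -> (forall w, P w -> Q w) -> qs F E w0 Q.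
Proof. intros [N [n h]] i; exists N; split; auto. Qed.

Lemma qs_and (P Q : Omega -> Prop) : qs F E w0 P -> qs F E w0 Q -> qs F E w0 (fun w => P w /\ Q w).
Proof.
  intros [N1 [n1 h1]] [N2 [n2 h2]]; exists (fun w => N1 w \/ N2 w); split.
  - apply null_union; auto.
  - intros w hw; split; [apply h1 | apply h2]; tauto.
Qed.

(* A nonnegative element of H vanishes in expectation on a null set; this uses
   the continuity axiom on the decreasing sequence I_N (g - i)^+. *)
Lemma E_null_zero N g : null F E w0 N -> H g -> (forall w, 0 <= g w) ->
  E 0%nat (fun w => indic N w * g w) w0 = 0.
Proof.
  intros [fN eN] hg g0; unfold Ereal in eN.
  set (f := fun (i : nat) w => indic N w * Rmax (g w - INR i) 0).
  assert (Hf : forall i, H (f i)).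
  { intro i; apply (H_ind hH); auto; apply H_pos_part, H_minus; auto; apply (H_const hH). }
  assert (cv : Un_cv (fun i => E 0%nat (f i) w0) 0).
  { apply (E_cont hE f Hf).
    - intros i w; unfold f; rewrite S_INR; indic_cases; [| lra].
      apply Rmult_le_compat_l; [lra |]; apply Rle_max_compat_r; lra.
    - intros w e he; destruct (INR_archimed 1 (g w)) as [M hM]; [lra |].
      exists M; intros i hi; unfold R_dist, f; apply le_INR in hi.
      rewrite Rmax_right by lra; rewrite Rmult_0_r, Rminus_0_r, Rabs_R0; auto. }
  apply Rle_antisym.
  - apply (Rle_cv_lim (Un := fun _ => E 0%nat (fun w => indic N w * g w) w0)
                      (Vn := fun i => E 0%nat (f i) w0)); [| apply cv_const | exact cv].
    intro i.
    assert (hI : E 0%nat (fun w => INR i * indic N w) w0 = 0).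
    { rewrite E_pos_homog, eN; [ring | apply pos_INR | apply H_indic, fN]. }
    eapply Rle_trans; [apply (E_le _ _ (fun w => f i w + INR i * indic N w)) |].
    + apply (H_ind hH); auto.
    + apply (H_add hH); auto; apply H_indic_const, fN.
    + intro v; unfold f; indic_cases; [unfold Rmax; destruct Rle_dec |]; lra.
    + eapply Rle_trans; [apply (E_subadd hE); auto; apply H_indic_const, fN | lra].
  - apply E_nonneg; [apply (H_ind hH); auto | intro v; indic_cases; [rewrite Rmult_1_l; auto | lra]].
Qed.

(* The exceptional null set is absorbed by [E_null_zero]. *)
Lemma E_bound_by_increasing (g : Omega -> R) (h : nat -> Omega -> R) b :
  H g -> (forall m, H (h m)) -> (forall w, 0 <= g w) -> (forall m w, 0 <= h m w) ->
  (forall m w, h m w <= h (S m) w) ->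
  qs F E w0 (fun w => Un_cv (fun m => Rmax (g w - h m w) 0) 0) ->
  (forall m, Ereal E w0 (h m) <= b) -> Ereal E w0 g <= b.
Proof.
  intros hg hh g0 h0 hinc [N [nN hN]] hb.
  assert (fNc : Finf F (fun v => ~ N v)) by (apply sa_compl, (proj1 nN); apply Finf_sa).
  set (f := fun m w => indic (fun v => ~ N v) w * Rmax (g w - h m w) 0).
  assert (Hf : forall m, H (f m)) by (intro m; apply (H_ind hH); auto; apply H_pos_part, H_minus; auto).
  assert (cv : Un_cv (fun m => E 0%nat (f m) w0) 0).
  { apply (E_cont hE f Hf).
    - intros m w; unfold f; indic_cases; [| lra].
      apply Rmult_le_compat_l; [lra |]; apply Rle_max_compat_r; specialize (hinc m w); lra.
    - intros w; unfold f; indic_cases.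
      + apply (cv_dominated _ _ 0 0 (fun m => Rle_refl _)).
        rewrite (fext _ _ (fun m => Rmult_1_l _)); apply hN, hA.
      + apply (cv_dominated _ (fun _ => 0) 0 0); [intro m; rewrite Rmult_0_l; lra | apply cv_const]. }
  unfold Ereal in *.
  apply (Rle_cv_lim (Un := fun _ => E 0%nat g w0) (Vn := fun m => E 0%nat (f m) w0 + b));
    [| apply cv_const | rewrite <- (Rplus_0_l b) at 1; apply CV_plus; [exact cv | apply cv_const]].
  intro m.
  assert (hNg : H (fun w => indic N w * g w)) by (apply (H_ind hH); auto; apply nN).
  eapply Rle_trans; [apply (E_le _ _ (fun w => indic N w * g w + (f m w + h m w))) |].
  - exact hg.
  - apply (H_add hH); auto; apply (H_add hH); auto.
  - intro w; unfold f; specialize (h0 m w); specialize (g0 w).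
    indic_cases; try tauto; [lra | unfold Rmax; destruct Rle_dec; lra].
  - eapply Rle_trans; [apply (E_subadd hE); auto; apply (H_add hH); auto |].
    rewrite (E_null_zero N g nN hg g0).
    specialize (hb m); pose proof (E_subadd hE 0 (f m) (h m) (Hf m) (hh m) w0); lra.
Qed.

Definition fast (C : R) (Y : nat -> Omega -> R) : Prop :=
  (forall k, H (Y k)) /\ forall k, Ereal E w0 (fun w => Rabs (Y (S k) w - Y k w)) <= C * (/ 2) ^ k.

Definition conv_qs (Y : nat -> Omega -> R) (X : Omega -> R) : Prop :=
  qs F E w0 (fun w => Un_cv (fun k => Y k w) (X w)).

Definition approxs (C : R) (Y : nat -> Omega -> R) (X : Omega -> R) : Prop :=
  fast C Y /\ conv_qs Y X.

Lemma fast_nonneg C Y : fast C Y -> 0 <= C.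
Proof.
  intros [hY gY]; specialize (gY O); simpl in gY.
  assert (0 <= Ereal E w0 (fun w => Rabs (Y 1%nat w - Y O w))); [| lra].
  apply E_nonneg; [apply H_abs_diff; auto | intro; apply Rabs_pos].
Qed.

Lemma fast_dom C (Y D : nat -> Omega -> R) :
  (forall k, H (Y k)) -> (forall k, H (D k)) -> (forall k w, Rabs (Y (S k) w - Y k w) <= D k w) ->
  (forall k, Ereal E w0 (D k) <= C * (/ 2) ^ k) -> fast C Y.
Proof.
  intros a b c d; split; auto; intro k; eapply Rle_trans; [| apply d].
  apply E_le; auto using H_abs_diff.
Qed.

(* Key estimate: a fast sequence tending to 0 quasi-surely is small in E|.|,
   namely E|W_k| <= 2C 2^-k.  |W_k| is dominated by the increasing partial sums
   of the increments h_m plus the vanishing tail |W_{k+m+1}|. *)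
Lemma fast_to_zero C W : fast C W -> conv_qs W (fun _ => 0) ->
  forall k, Ereal E w0 (fun w => Rabs (W k w)) <= 2 * C * (/ 2) ^ k.
Proof.
  intros fW cW k; pose proof (fast_nonneg C W fW) as hC; destruct fW as [hW gW].
  set (d := fun j w => Rabs (W (S (k + j)) w - W (k + j)%nat w)).
  set (h := fun m w => sum_f_R0 (fun j => d j w) m).
  assert (hd : forall j, H (d j)) by (intro j; apply H_abs_diff; auto).
  assert (d0 : forall j w, 0 <= d j w) by (intros; apply Rabs_pos).
  assert (hS : forall m w, h (S m) w = h m w + d (S m) w) by reflexivity.
  assert (Hh : forall m, H (h m)).
  { induction m as [| m IH]; [apply hd | apply (H_ext _ _ (H_add hH _ _ IH (hd (S m)))); auto]. }
  assert (h0 : forall m w, 0 <= h m w).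
  { induction m as [| m IH]; intro w; [apply Rabs_pos |].
    rewrite hS; specialize (d0 (S m) w); specialize (IH w); lra. }
  assert (Eh : forall m, Ereal E w0 (h m) <= 2 * C * ((/ 2) ^ k - (/ 2) ^ (k + S m))).
  { induction m as [| m IH].
    - rewrite <- geom_budget_step, Nat.add_0_r, Rminus_diag; specialize (gW k); unfold Ereal in *.
      rewrite (E_eq 0 (h O) (d O)) by reflexivity; unfold d; rewrite Nat.add_0_r; lra.
    - rewrite <- geom_budget_step; unfold Ereal in *.
      rewrite (E_eq 0 (h (S m)) (fun w => h m w + d (S m) w)) by (intro; apply hS).
      eapply Rle_trans; [apply (E_subadd hE); auto |].
      specialize (gW (k + S m)%nat); unfold d; lra. }
  assert (tail : forall m w, Rabs (W k w) <= h m w + Rabs (W (k + S m)%nat w)).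
  { assert (tri : forall a b, Rabs a <= Rabs (b - a) + Rabs b)
      by (intros a b; unfold Rabs; repeat destruct Rcase_abs; lra).
    induction m as [| m IH]; intro w.
    - replace (k + 1)%nat with (S (k + 0)) by lia; unfold h, d; simpl; rewrite Nat.add_0_r; apply tri.
    - specialize (IH w); specialize (tri (W (k + S m)%nat w) (W (S (k + S m)) w)).
      rewrite hS; replace (k + S (S m))%nat with (S (k + S m)) by lia; unfold d; lra. }
  apply (E_bound_by_increasing _ h); auto.
  - apply (H_abs hH), hW.
  - intro; apply Rabs_pos.
  - intros m w; rewrite hS; specialize (d0 (S m) w); lra.
  - apply (qs_mono _ _ cW); intros w hw.
    apply (cv_dominated _ (fun m => W (k + S m)%nat w) 0 0); [| apply (cv_shift (fun j => W j w)), hw].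
    intro m; specialize (tail m w); specialize (h0 m w).
    rewrite !Rminus_0_r, Rabs_right by (apply Rle_ge, Rmax_r).
    unfold Rmax; destruct Rle_dec; [apply Rabs_pos | lra].
  - intro m; eapply Rle_trans; [apply Eh | apply geom_budget_le, hC].
Qed.

Lemma approxs_compare C C' Y Y' X X' :
  approxs C Y X -> approxs C' Y' X' -> qs F E w0 (fun w => X w <= X' w) ->
  forall k, Ereal E w0 (Y k) <= Ereal E w0 (Y' k) + 2 * (C + C') * (/ 2) ^ k.
Proof.
  intros [[hY eY] cY] [[hY' eY'] cY'] hle k.
  set (W := fun k w => Rmax (Y k w - Y' k w) 0).
  assert (HW : forall k, H (W k)) by (intro; apply H_pos_part, H_minus; auto).
  assert (fW : fast (C + C') W).
  { apply (fast_dom _ W (fun k w => Rabs (Y (S k) w - Y k w) + Rabs (Y' (S k) w - Y' k w))); auto.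
    - intro j; apply (H_add hH); apply H_abs_diff; auto.
    - intros j w; unfold W, Rmax; repeat destruct Rle_dec; unfold Rabs; repeat destruct Rcase_abs; lra.
    - intro j; unfold Ereal in *; eapply Rle_trans; [apply (E_subadd hE); apply H_abs_diff; auto |].
      specialize (eY j); specialize (eY' j); lra. }
  assert (cW : conv_qs W (fun _ => 0)).
  { apply (qs_mono _ _ (qs_and _ _ (qs_and _ _ cY cY') hle)); intros w [[c1 c2] c3].
    apply (cv_dominated _ (fun k => Y k w - Y' k w) 0 (X w - X' w)); [| apply CV_minus; auto].
    intro j; unfold W, Rmax; destruct Rle_dec; unfold Rabs; repeat destruct Rcase_abs; lra. }
  pose proof (fast_to_zero _ W fW cW k) as hk; unfold Ereal in *.
  assert (E 0%nat (Y k) w0 - E 0%nat (Y' k) w0 <= E 0%nat (fun w => Rabs (W k w)) w0); [| lra].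
  eapply Rle_trans; [apply E_diff_le; auto |].
  apply E_le; [apply H_minus | apply (H_abs hH) |]; auto.
  intro v; unfold W, Rmax; destruct Rle_dec; unfold Rabs; destruct Rcase_abs; lra.
Qed.

Lemma approxs_const g : H g -> approxs 0 (fun _ => g) g.
Proof.
  intro hg; split; [split |].
  - intro; exact hg.
  - intro k; unfold Ereal; rewrite (E_eq 0 _ (fun _ => 0)), E_const by (intro; rewrite Rminus_diag, Rabs_R0; auto); lra.
  - apply qs_all; intro w; apply cv_const.
Qed.

Lemma approxs_add C C' Y Y' X X' : approxs C Y X -> approxs C' Y' X' ->
  approxs (C + C') (fun k w => Y k w + Y' k w) (fun w => X w + X' w).
Proof.
  intros [[hY eY] cY] [[hY' eY'] cY']; split.
  - apply (fast_dom _ _ (fun k w => Rabs (Y (S k) w - Y k w) + Rabs (Y' (S k) w - Y' k w))).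
    + intro; apply (H_add hH); auto.
    + intro; apply (H_add hH); apply H_abs_diff; auto.
    + intros k w; eapply Rle_trans; [| apply Rabs_triang]; right; f_equal; ring.
    + intro k; unfold Ereal in *; eapply Rle_trans; [apply (E_subadd hE); apply H_abs_diff; auto |].
      specialize (eY k); specialize (eY' k); lra.
  - apply (qs_mono _ _ (qs_and _ _ cY cY')); intros w [c1 c2]; apply CV_plus; auto.
Qed.

Lemma approxs_indic C A Y X : Finf F A -> approxs C Y X ->
  approxs C (fun k w => indic A w * Y k w) (fun w => indic A w * X w).
Proof.
  intros hA [[hY eY] cY]; split.
  - apply (fast_dom _ _ (fun k w => Rabs (Y (S k) w - Y k w))); auto.
    + intro; apply (H_ind hH); auto.
    + intro; apply H_abs_diff; auto.
    + intros k w; rewrite <- Rmult_minus_distr_l, Rabs_mult.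
      pose proof (Rabs_pos (Y (S k) w - Y k w)); indic_cases; rewrite ?Rabs_R1, ?Rabs_R0; lra.
  - apply (qs_mono _ _ cY); intros w c; apply CV_mult; [apply cv_const | exact c].
Qed.

(* Conditioning preserves fastness, since E_t is 1-Lipschitz and E_0 E_t = E_0. *)
Lemma fast_cond t C Y : fast C Y -> fast C (fun k => E t (Y k)).
Proof.
  intros [hY eY].
  apply (fast_dom _ _ (fun k => E t (fun w => Rabs (Y (S k) w - Y k w)))).
  - intro; apply E_in_H; auto.
  - intro; apply E_in_H, H_abs_diff; auto.
  - intros k w; apply E_abs_diff; auto.
  - intro k; unfold Ereal in *; rewrite E_tower0; [apply eY | apply H_abs_diff; auto].
Qed.

Lemma approxs_of_inL1 X : inL1 F H E w0 X -> exists Y, approxs 1 Y X.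
Proof.
  intros [Y [hY [eY cY]]]; exists Y; split; [split |]; auto.
  intro k; rewrite Rmult_1_l; apply eY.
Qed.

Lemma approxs_of_CEL1 t X Z : CEL1 F H E w0 t X Z ->
  exists Y, approxs 1 Y X /\ conv_qs (fun k => E t (Y k)) Z.
Proof.
  intros [Y [[hY [eY cY]] cZ]]; exists Y; split; auto; split; [split |]; auto.
  intro k; rewrite Rmult_1_l; apply eY.
Qed.

(* It exists for every approximable X
   and does not depend on the sequence (see [Lval_approxs]). *)
Definition Lval (X : Omega -> R) (r : R) : Prop :=
  exists C Y, approxs C Y X /\ Un_cv (fun k => Ereal E w0 (Y k)) r.

Lemma approxs_cv C Y X : approxs C Y X -> exists r, Un_cv (fun k => Ereal E w0 (Y k)) r.
Proof.
  intros [[hY eY] _]; apply (geom_increments_cv _ C); intro k.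
  eapply Rle_trans; [apply E_abs_diff; auto | apply eY].
Qed.

Lemma Lval_mono X X' r r' : Lval X r -> Lval X' r' -> qs F E w0 (fun w => X w <= X' w) -> r <= r'.
Proof.
  intros [C [Y [aY lY]]] [C' [Y' [aY' lY']]] hle.
  exact (cv_le_geom _ _ r r' _ (approxs_compare _ _ _ _ _ _ aY aY' hle) lY lY').
Qed.

Lemma Lval_approxs X r C Y : Lval X r -> approxs C Y X -> Un_cv (fun k => Ereal E w0 (Y k)) r.
Proof.
  intros hX aY; destruct (approxs_cv _ _ _ aY) as [r' hr'].
  assert (hX' : Lval X r') by (exists C, Y; auto).
  assert (refl : qs F E w0 (fun w => X w <= X w)) by (apply qs_all; intro; lra).
  replace r with r'; auto; apply Rle_antisym; eapply Lval_mono; eauto.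
Qed.

Lemma Lval_ext X X' r : Lval X r -> (forall w, X w = X' w) -> Lval X' r.
Proof. intros h e; rewrite <- (fext _ _ e); exact h. Qed.

Lemma Lval_of_H g : H g -> Lval g (Ereal E w0 g).
Proof. intro hg; exists 0, (fun _ => g); split; [apply approxs_const, hg | apply cv_const]. Qed.

Lemma Lval_of_EL1 X r : EL1 F H E w0 X r -> Lval X r.
Proof.
  intros [Y [[hY [eY cY]] lY]]; exists 1, Y; split; [split; [split |] |]; auto.
  intro k; rewrite Rmult_1_l; apply eY.
Qed.

Lemma Lval_affine c S X : H c -> Finf F S -> inL1 F H E w0 X ->
  exists r, Lval (fun w => c w + indic S w * X w) r.
Proof.
  intros hc hS hX; destruct (approxs_of_inL1 X hX) as [Y aY].
  assert (aU : approxs (0 + 1) (fun k w => c w + indic S w * Y k w) (fun w => c w + indic S w * X w))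
    by (apply approxs_add; [apply approxs_const, hc | apply approxs_indic; auto]).
  destruct (approxs_cv _ _ _ aU) as [r hr]; exists r, (0 + 1), (fun k w => c w + indic S w * Y k w); auto.
Qed.

Lemma Lval_add X X' r r' : Lval X r -> Lval X' r' ->
  exists s, Lval (fun w => X w + X' w) s /\ s <= r + r'.
Proof.
  intros [C [Y [aY lY]]] [C' [Y' [aY' lY']]].
  pose proof (approxs_add _ _ _ _ _ _ aY aY') as aS.
  destruct (approxs_cv _ _ _ aS) as [s hs]; exists s; split; [exists (C + C'), (fun k w => Y k w + Y' k w); auto |].
  apply (Rle_cv_lim (Un := fun k => Ereal E w0 (fun w => Y k w + Y' k w))
                    (Vn := fun k => Ereal E w0 (Y k) + Ereal E w0 (Y' k))); auto; [| apply CV_plus; auto].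
  intro k; destruct aY as [[hY _] _], aY' as [[hY' _] _]; apply (E_subadd hE); auto.
Qed.

(* Let S be F_t-measurable, T disjoint from S, U their
   union, and Z = E_t(X).  If c + I_U X has expectation r, then so does
   c + I_S Z + I_T X: both are approximated by sequences with identical
   expectations, by the tower property and [E_split_disjoint]. *)
Lemma Lval_condition t c U S T X Z r :
  Ht F H t c -> F t S -> Finf F T ->
  (forall w, U w <-> S w \/ T w) -> (forall w, S w -> ~ T w) ->
  CEL1 F H E w0 t X Z ->
  Lval (fun w => c w + indic U w * X w) r ->
  Lval (fun w => c w + indic S w * Z w + indic T w * X w) r.
Proof.
  intros hc hS hT hU hST hZ hr.
  destruct (approxs_of_CEL1 _ _ _ hZ) as [W [aW cEW]].
  assert (hS' : Finf F S) by (apply (F_Finf _ t), hS).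
  assert (hW : forall k, H (W k)) by apply aW.
  set (G := fun k w => c w + indic S w * W k w + indic T w * W k w).
  set (V := fun k w => c w + indic S w * E t (W k) w + indic T w * W k w).
  assert (aG : approxs (0 + 1 + 1) G (fun w => c w + indic S w * X w + indic T w * X w)).
  { apply approxs_add; [apply approxs_add; [apply approxs_const, hc |] |]; apply approxs_indic; auto. }
  assert (aV : approxs (0 + 1 + 1) V (fun w => c w + indic S w * Z w + indic T w * X w)).
  { apply approxs_add; [apply approxs_add; [apply approxs_const, hc |] |]; apply approxs_indic; auto.
    split; [apply fast_cond, aW | exact cEW]. }
  assert (hr' : Lval (fun w => c w + indic S w * X w + indic T w * X w) r).
  { apply (Lval_ext _ _ _ hr); intro w; specialize (hU w); specialize (hST w); indic_cases; first [ring | tauto]. }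
  exists (0 + 1 + 1), V; split; auto.
  assert (same : forall k, Ereal E w0 (G k) = Ereal E w0 (V k)).
  { intro k; destruct aG as [[hG _] _], aV as [[hV _] _]; unfold Ereal.
    rewrite <- (E_tower0 t (G k)), <- (E_tower0 t (V k)) by auto; f_equal; apply fext; intro w.
    assert (hSE : Ht F H t (fun v => indic S v * E t (W k) v)) by (apply Ht_indic_mul, (E_range hE); auto).
    assert (hTW : H (fun v => indic T v * W k v)) by (apply (H_ind hH); auto).
    unfold G, V.
    rewrite (E_eq t _ (fun v => c v + (indic S v * W k v + indic T v * W k v))) by (intro; ring).
    rewrite (E_eq t (fun v => _ + _ * E t (W k) v + _) (fun v => c v + (indic S v * E t (W k) v + indic T v * W k v)))
      by (intro; ring).
    rewrite !(E_transl t c), E_split_disjoint, (E_transl t (fun v => indic S v * E t (W k) v)); auto.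
    - apply (H_add hH); auto; apply (H_ind hH); auto; apply E_in_H; auto.
    - apply (H_add hH); auto; apply (H_ind hH); auto. }
  rewrite <- (fext _ _ same); exact (Lval_approxs _ _ _ _ hr' aG).
Qed.

(* With B_m = {max_{j<=m} X_j >= lam}
   and A = B_n, the L^1 elements U_m = lam I_{B_m} + I_{A \ B_m} X_n run from
   U_0 = I_A X_n to U_n = lam I_A, and their expectations decrease in m, because
   on B_{m+1} \ B_m we have lam <= X_{m+1} <= E_{m+1}(X_n) ([Lval_condition]). *)
Section RunningMaximum.
Variables (n : nat) (X : nat -> Omega -> R) (lam : R).
Hypotheses (hlam : 0 <= lam) (hX : SLsubmart F H E w0 (S n) X).

Let P := fun j v => X j v >= lam.
Let A := hit P (S n).
Let U m w := lam * indic (hit P m) w + indic (fun v => A v /\ ~ hit P m v) w * X (S n) w.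

Let hit_known m t : (m <= t)%nat -> (t <= S n)%nat -> F t (hit P m).
Proof.
  intros h1 h2; apply (hit_adapted F hF P (S n)); auto.
  intros j hj; apply meas_ge; [apply (filt_sigma hF) | apply hX; lia].
Qed.

Let A_Finf : Finf F A.
Proof. apply (F_Finf _ (S n)), hit_known; lia. Qed.

Let U_start r : EL1 F H E w0 (fun w => indic A w * X (S n) w) r -> Lval (U 0) r.
Proof.
  intro hr; apply (Lval_ext _ _ _ (Lval_of_EL1 _ _ hr)); intro w; unfold U.
  pose proof (hit_0 P w); indic_cases; cbv beta in *; first [ring | tauto].
Qed.

Let U_step m r : (m < S n)%nat -> Lval (U m) r -> exists r', Lval (U (S m)) r' /\ r' <= r.
Proof.
  intros hm hUm; destruct hX as [hXj hsub].
  destruct (hsub (S m) (S n) ltac:(lia) hm ltac:(lia)) as [Z [hZ hXZ]].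
  assert (hFm := hit_known m (S m) ltac:(lia) ltac:(lia)).
  assert (hFt := hit_known (S m) (S m) ltac:(lia) hm).
  assert (hTt : Finf F (fun v => A v /\ ~ hit P (S m) v)).
  { apply sa_inter; [apply Finf_sa | exact A_Finf | apply sa_compl, (F_Finf _ (S m)), hFt; apply Finf_sa]. }
  assert (sub_t : forall w, hit P m w -> hit P (S m) w) by (intro w; apply hit_mono; lia).
  assert (sub_A : forall w, hit P (S m) w -> A w) by (intro w; apply hit_mono; lia).
  destruct (Lval_affine (fun w => lam * indic (hit P (S m)) w) (fun v => A v /\ ~ hit P (S m) v) (X (S n)))
    as [r' hUt]; [apply H_indic_const, (F_Finf _ (S m)), hFt | exact hTt | apply hXj; lia |].
  exists r'; split; [exact hUt |].
  eapply (Lval_mono _ _ _ _ hUt).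
  - apply (Lval_condition (S m) (fun w => lam * indic (hit P m) w) (fun v => A v /\ ~ hit P m v)
             (fun v => hit P (S m) v /\ ~ hit P m v) (fun v => A v /\ ~ hit P (S m) v) (X (S n)) Z r); auto.
    + apply Ht_indic_const, hFm.
    + apply sa_inter, sa_compl; auto; apply (filt_sigma hF).
    + intro w; specialize (sub_t w); specialize (sub_A w); tauto.
    + intro w; tauto.
  - apply (qs_mono _ _ hXZ); intros w hw.
    assert (hnew : hit P (S m) w -> ~ hit P m w -> lam <= X (S m) w)
      by (intros h1 h2; destruct (proj1 (hit_S P m w) h1) as [h | h]; [tauto | unfold P in h; lra]).
    specialize (sub_t w); specialize (sub_A w); unfold U.
    indic_cases; cbv beta in *; try tauto; try lra.
    specialize (hnew ltac:(tauto) ltac:(tauto)); lra.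
Qed.

Let U_end r : Lval (U (S n)) r -> lam * capV E w0 A <= r.
Proof.
  intro hUn; unfold capV, Ereal; rewrite <- E_pos_homog by (auto; apply H_indic, A_Finf).
  apply (Lval_mono _ _ _ _ (Lval_of_H _ (H_indic_const A lam A_Finf)) hUn), qs_all; intro w; unfold U.
  indic_cases; cbv beta in *; try tauto; lra.
Qed.

Lemma max_capacity_bound r :
  EL1 F H E w0 (fun w => indic (fun v => maxX X (S n) v >= lam) w * X (S n) w) r ->
  lam * capV E w0 (fun v => maxX X (S n) v >= lam) <= r.
Proof.
  rewrite (sext _ A (maxX_hit X lam n)); intro hr.
  assert (steps : forall m, (m <= S n)%nat -> exists r', Lval (U m) r' /\ r' <= r).
  { induction m as [| m IH]; intro hm.
    - exists r; split; [apply U_start, hr | lra].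
    - destruct (IH ltac:(lia)) as [rm [hUm hrm]].
      destruct (U_step m rm hm hUm) as [r' [hUt hr']]; exists r'; split; [exact hUt | lra]. }
  destruct (steps (S n) (le_n _)) as [rn [hUn hrn]]; apply (Rle_trans _ rn); [apply U_end, hUn | exact hrn].
Qed.

End RunningMaximum.

(* With B_i = {min_{j<=i} X_j <= -lam}
   and B = B_n, the elements T_i = -lam I_{B_i} + I_{B_i^c} X_{i+1} start at
   T_0 = X_1 and their expectations increase in i: on B_{i+1} \ B_i we have
   X_{i+1} <= -lam, and off B_{i+1}, X_{i+1} <= E_{i+1}(X_{i+2}) ([Lval_condition]
   with an empty second event).  Finally T_{n-1} <= -lam I_B + X_n - I_B X_n,
   whose expectation is split by subadditivity. *)
Section RunningMinimum.
Variables (n : nat) (X : nat -> Omega -> R) (lam : R).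
Hypotheses (hlam : 0 <= lam) (hX : SLsubmart F H E w0 (S n) X).

Let P := fun j v => X j v <= - lam.
Let B := hit P (S n).
Let T i w := - lam * indic (hit P i) w + indic (fun v => ~ hit P i v) w * X (S i) w.

Let hit_known m t : (m <= t)%nat -> (t <= S n)%nat -> F t (hit P m).
Proof. intros h1 h2; apply (hit_adapted F hF P (S n)); auto; intros j hj; apply hX; lia. Qed.

Let B_Finf : Finf F B.
Proof. apply (F_Finf _ (S n)), hit_known; lia. Qed.

Let T_start r1 : EL1 F H E w0 (X 1%nat) r1 -> Lval (T 0) r1.
Proof.
  intro hr1; apply (Lval_ext _ _ _ (Lval_of_EL1 _ _ hr1)); intro w; unfold T.
  pose proof (hit_0 P w); indic_cases; cbv beta in *; first [ring | tauto].
Qed.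

Let T_step i t : (i < n)%nat -> Lval (T i) t -> exists t', Lval (T (S i)) t' /\ t <= t'.
Proof.
  intros hi hTi; destruct hX as [hXj hsub].
  destruct (hsub (S i) (S (S i)) ltac:(lia) ltac:(lia) ltac:(lia)) as [Z [hZ hXZ]].
  assert (hFs := hit_known (S i) (S i) ltac:(lia) ltac:(lia)).
  assert (hFsc : F (S i) (fun v => ~ hit P (S i) v)) by (apply sa_compl, hFs; apply (filt_sigma hF)).
  destruct (Lval_affine (fun w => - lam * indic (hit P (S i)) w) (fun v => ~ hit P (S i) v) (X (S (S i))))
    as [t' hTs]; [apply H_indic_const, (F_Finf _ (S i)), hFs | apply (F_Finf _ (S i)), hFsc | apply hXj; lia |].
  exists t'; split; [exact hTs |].
  eapply (Lval_mono _ _ _ _ hTi).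
  - apply (Lval_condition (S i) (fun w => - lam * indic (hit P (S i)) w) (fun v => ~ hit P (S i) v)
             (fun v => ~ hit P (S i) v) (fun _ => False) (X (S (S i))) Z t'); auto.
    + apply Ht_indic_const, hFs.
    + apply sa_prop, Finf_sa.
    + intro w; tauto.
  - apply (qs_mono _ _ hXZ); intros w hw.
    assert (hnew : hit P (S i) w -> ~ hit P i w -> X (S i) w <= - lam)
      by (intros h1 h2; destruct (proj1 (hit_S P i w) h1) as [h | h]; [tauto | exact h]).
    assert (sub : hit P i w -> hit P (S i) w) by (apply hit_mono; lia).
    unfold T; indic_cases; cbv beta in *; try tauto; try lra.
    specialize (hnew ltac:(tauto) ltac:(tauto)); lra.
Qed.

Let T_end t rn s1 :
  Lval (T n) t -> EL1 F H E w0 (X (S n)) rn ->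
  EL1 F H E w0 (fun w => - (indic B w * X (S n) w)) s1 ->
  t <= - (lam * capv E w0 B) + rn + s1.
Proof.
  intros hTn hrn hs1.
  assert (hlB : H (fun w => - lam * indic B w)) by (apply H_indic_const, B_Finf).
  destruct (Lval_add _ _ _ _ (Lval_of_H _ hlB) (Lval_of_EL1 _ _ hrn)) as [s [hs hs_le]].
  destruct (Lval_add _ _ _ _ hs (Lval_of_EL1 _ _ hs1)) as [s' [hs' hs'_le]].
  assert (htop : t <= s').
  { apply (Lval_mono _ _ _ _ hTn hs'), qs_all; intro w; unfold T.
    assert (sub : hit P n w -> B w) by (apply hit_mono; lia).
    assert (hlast : B w -> ~ hit P n w -> X (S n) w <= - lam)
      by (intros h1 h2; destruct (proj1 (hit_S P n w) h1) as [h | h]; [tauto | exact h]).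
    indic_cases; cbv beta in *; try tauto; try lra.
    specialize (hlast ltac:(tauto) ltac:(tauto)); lra. }
  assert (hcap : Ereal E w0 (fun w => - lam * indic B w) = - (lam * capv E w0 B)).
  { unfold capv, Ereal; rewrite (E_eq 0 _ (fun w => lam * - indic B w)) by (intro; ring).
    rewrite E_pos_homog by (auto; apply H_opp, H_indic, B_Finf); ring. }
  lra.
Qed.

Lemma min_capacity_bound rn r1 s1 :
  EL1 F H E w0 (X (S n)) rn -> EL1 F H E w0 (X 1%nat) r1 ->
  EL1 F H E w0 (fun w => - (indic (fun v => minX X (S n) v <= - lam) w * X (S n) w)) s1 ->
  lam * capv E w0 (fun v => minX X (S n) v <= - lam) <= rn - r1 + s1.
Proof.
  rewrite (sext _ B (minX_hit X lam n)); intros hrn hr1 hs1.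
  assert (steps : forall i, (i <= n)%nat -> exists t, Lval (T i) t /\ r1 <= t).
  { induction i as [| i IH]; intro hi.
    - exists r1; split; [apply T_start, hr1 | lra].
    - destruct (IH ltac:(lia)) as [ti [hTi hri]].
      destruct (T_step i ti hi hTi) as [t' [hTs ht']]; exists t'; split; [exact hTs | lra]. }
  destruct (steps n (le_n _)) as [tn [hTn htn]].
  pose proof (T_end tn rn s1 hTn hrn hs1); lra.
Qed.

End RunningMinimum.

Lemma EL1_mono X X' r r' :
  EL1 F H E w0 X r -> EL1 F H E w0 X' r' -> (forall w, X w <= X' w) -> r <= r'.
Proof.
  intros h h' hle; apply (Lval_mono _ _ _ _ (Lval_of_EL1 _ _ h) (Lval_of_EL1 _ _ h')), qs_all, hle.
Qed.

End SublinearExpectation.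

Theorem theorem3p1 (Omega : Type) (F : nat -> (Omega -> Prop) -> Prop)
  (H : (Omega -> R) -> Prop) (E : nat -> (Omega -> R) -> (Omega -> R)) (w0 : Omega)
  (hF : filtration F) (hH : Hspace F H) (hE : SLexp F H E)
  (n : nat) (X : nat -> (Omega -> R))
  (hn : (1 <= n)%nat) (hX : SLsubmart F H E w0 n X)
  (lam : R) (hlam : 0 < lam) :
  (forall r1 r2 r3 : R,
     EL1 F H E w0 (fun w => indic (fun v => maxX X n v >= lam) w * X n w) r1 ->
     EL1 F H E w0 (fun w => ppart (X n w)) r2 ->
     EL1 F H E w0 (fun w => Rabs (X n w)) r3 ->
     lam * capV E w0 (fun v => maxX X n v >= lam) <= r1 /\ r1 <= r2 /\ r2 <= r3)
  /\
  (forall (rn r1 s1 s2 : R),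
     EL1 F H E w0 (X n) rn ->
     EL1 F H E w0 (X 1%nat) r1 ->
     EL1 F H E w0 (fun w => - (indic (fun v => minX X n v <= - lam) w * X n w)) s1 ->
     EL1 F H E w0 (fun w => npart (X n w)) s2 ->
     lam * capv E w0 (fun v => minX X n v <= - lam) <= rn - r1 + s1 /\
     rn - r1 + s1 <= rn - r1 + s2).
Proof.
  destruct n as [| n]; [lia |]; split.
  - intros r1 r2 r3 h1 h2 h3; split; [| split].
    + eapply max_capacity_bound; eauto; lra.
    + eapply EL1_mono; eauto; intro w; unfold ppart, Rmax; indic_cases; destruct Rle_dec; lra.
    + eapply EL1_mono; eauto; intro w; unfold ppart, Rmax, Rabs; destruct Rle_dec, Rcase_abs; lra.
  - intros rn r1 s1 s2 hrn hr1 hs1 hs2; split.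
    + eapply min_capacity_bound; eauto; lra.
    + apply Rplus_le_compat_l; eapply EL1_mono; eauto.
      intro w; unfold npart, Rmax; indic_cases; destruct Rle_dec; lra.
Qed.
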